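(* Let $A$ be a finite set of alternatives with $|A|\ge 3$, let $N=\{1,\dots,n\}$ with $n\ge 2$, and let $\mathbb{D}$ be a minimally rich and L-tops-only domain of linear orders over $A$. If $\mathbb{D}$ is connected with two distinct neighbours, then every unanimous and locally strategy-proof social choice function $f:\mathbb{D}^n\to A$ satisfies dictatorship.
   Context: A domain is a set $\mathbb{D}$ of linear orders (strict preferences) over $A$; a preference profile is $P=(P_1,\dots,P_n)\in\mathbb{D}^n$. For a linear order $P_i$, $r_k(P_i)$ is its $k$-th ranked alternative. $\mathbb{D}$ is minimally rich if every $a\in A$ is ranked first in some $P_i\in\mathbb{D}$. Two linear orders $P_i,P_i'$ are adjacent ($P_i\sim P_i'$) if $P_i'$ is obtained from $P_i$ by swapping two consecutively ranked alternatives and leaving all other ranks unchanged. A social choice function (scf) is a map $f:\mathbb{D}^n\to A$. It is unanimous if $f(P)=a$ whenever every voter ranks $a$ first. It is locally strategy-proof if there is no voter $i$, profile $P$, and $P_i'\in\mathbb{D}$ with $P_i'\sim P_i$ such that $f(P_i',P_{-i})\,P_i\,f(P_i,P_{-i})$. It satisfies dictatorship if there is a voter $i$ with $f(P)=r_1(P_i)$ for all $P\in\mathbb{D}^n$. It satisfies tops-onlyness if $f(P)=f(P')$ whenever $r_1(P_i)=r_1(P_i')$ for all $i$. $\mathbb{D}$ is L-tops-only if every unanimous and locally strategy-proof scf $f:\mathbb{D}^n\to A$ satisfies tops-onlyness. A path in $\mathbb{D}$ is a sequence of distinct preferences in $\mathbb{D}$ in which consecutive ones are adjacent; $\mathbb{D}$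 is connected if any two of its preferences are joined by a path in $\mathbb{D}$. For $\bar{\mathbb{D}}\subseteq\mathbb{D}$, a neighbour of $\bar{\mathbb{D}}$ in $\mathbb{D}$ is a $P_i\in\mathbb{D}\setminus\bar{\mathbb{D}}$ adjacent to some element of $\bar{\mathbb{D}}$. Two preferences $P_i,P_i'\in\mathbb{D}$ are top-connected in $\mathbb{D}$ if there is a path from $P_i$ to $P_i'$ in $\mathbb{D}$ all of whose members have the same top-ranked alternative. The top-connected closure $\mathbb{D}^{TCC}(P_i)$ is the set of preferences in $\mathbb{D}$ top-connected to $P_i$, together with $P_i$. $\mathbb{D}$ is connected with two distinct neighbours if (1) $\mathbb{D}$ is connected, and (2) for every $P_i\in\mathbb{D}$ there exist two neighbours $P_i',P_i''$ of $\mathbb{D}^{TCC}(P_i)$ in $\mathbb{D}$ with $r_1(P_i')\ne r_1(P_i'')$. *)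

From mathcomp Require Import all_boot all_fingroup.
Set Implicit Arguments. Unset Strict Implicit. Unset Printing Implicit Defensive.

Section Prefs.
Variable A : finType.

(* A preference is a #|A|-tuple listing the alternatives from rank 1 to rank #|A|;
   it is a linear order over A exactly when it is duplicate-free. *)
Definition pref := (#|A|).-tuple A.
Definition is_linorder (p : pref) : bool := uniq p.

(* r_1(p): the top-ranked alternative (None only for the degenerate empty A). *)
Definition top (p : pref) : option A := ohead p.

Definition prefers (p : pref) (a b : A) : bool := index a p < index b p.

Definition adjacent (p q : pref) : bool :=
  [exists k : 'I_#|A|, exists k' : 'I_#|A|,
     (val k' == (val k).+1) && [forall j, tnth q j == tnth p (tperm k k' j)]].

Definition minimally_rich (D : {set pref}) : Prop :=
  forall a : A, exists2 p, p \in D & top p = Some a.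

Definition path_in (D : {set pref}) (p : pref) (s : seq pref) (q : pref) : Prop :=
  [/\ uniq (p :: s), all (fun x => x \in D) (p :: s), path adjacent p s & last p s = q].

Definition connected_dom (D : {set pref}) : Prop :=
  forall p q, p \in D -> q \in D -> exists s, path_in D p s q.

Definition top_connected (D : {set pref}) (p q : pref) : Prop :=
  exists s, path_in D p s q /\ all (fun x => top x == top p) (p :: s).

Definition in_TCC (D : {set pref}) (p q : pref) : Prop :=
  q = p \/ top_connected D p q.

Definition neighbour (D : {set pref}) (S : pref -> Prop) (q : pref) : Prop :=
  [/\ q \in D, ~ S q & exists2 s, S s & adjacent s q].

Definition connected_two_neighbours (D : {set pref}) : Prop :=
  connected_dom D /\
  forall p, p \in D -> exists q q',
    [/\ neighbour D (in_TCC D p) q, neighbour D (in_TCC D p) q' & top q <> top q'].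

Variable n : nat.
Definition profile := {ffun 'I_n -> pref}.
Definition scf := profile -> A.

Definition in_dom (D : {set pref}) (P : profile) : Prop := forall i, P i \in D.

Definition upd (P : profile) (i : 'I_n) (p : pref) : profile :=
  [ffun j => if j == i then p else P j].

Definition unanimous (D : {set pref}) (f : scf) : Prop :=
  forall P a, in_dom D P -> (forall i, top (P i) = Some a) -> f P = a.

Definition locally_sp (D : {set pref}) (f : scf) : Prop :=
  forall P i p', in_dom D P -> p' \in D -> adjacent (P i) p' ->
    ~~ prefers (P i) (f (upd P i p')) (f P).

Definition dictatorship (D : {set pref}) (f : scf) : Prop :=
  exists i : 'I_n, forall P, in_dom D P -> Some (f P) = top (P i).

Definition tops_only (D : {set pref}) (f : scf) : Prop :=
  forall P P', in_dom D P -> in_dom D P' ->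
    (forall i, top (P i) = top (P' i)) -> f P = f P'.

Definition L_tops_only (D : {set pref}) : Prop :=
  forall f : scf, unanimous D f -> locally_sp D f -> tops_only D f.

End Prefs.

From mathcomp Require Import all_boot all_fingroup.
From mathcomp Require Import zify.
Set Implicit Arguments. Unset Strict Implicit. Unset Printing Implicit Defensive.

(* By tops-onlyness f factors through the profile of top alternatives. Join two
   alternatives when D has adjacent preferences with these tops: adjacent
   preferences with different tops differ exactly by swapping their first two
   alternatives, so local strategy-proofness says that moving one voter's top
   along an edge a -- b either keeps the outcome or moves it from a to b. This
   graph is connected and every vertex has two distinct neighbours.

   For two voters, no alternative a can win against a neighbour b in both orders:
   b would then win in both orders against a neighbour c <> a, and the component
   of c in the graph without b lies strictly inside the component of b in the
   graph without a. Hence a voter who wins on one edge wins on every edge, and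
   then everywhere. More voters reduce to fewer by merging two voters into one. *)

Lemma connect_propagate (T : finType) (e : rel T) (Q : T -> Prop) x y :
  (forall u v, e u v -> Q u -> Q v) -> connect e x y -> Q x -> Q y.
Proof.
move=> eQ /connectP [p + ->]; elim: p x => //= z p IH x /andP [e_xz e_p] Qx.
exact: IH e_p (eQ _ _ e_xz Qx).
Qed.
Arguments connect_propagate {T e} Q {x y}.

Section FunUpdate.
Variables (I : finType) (T : Type).
Implicit Types (t : {ffun I -> T}) (i j : I) (x y : T).

Definition fupd t i x : {ffun I -> T} := [ffun j => if j == i then x else t j].

Lemma fupd_id t i : fupd t i (t i) = t.
Proof. by apply/ffunP => j; rewrite ffunE; case: eqP => [->|]. Qed.

Lemma fupd_fupd t i x y : fupd (fupd t i x) i y = fupd t i y.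
Proof. by apply/ffunP => j; rewrite !ffunE; case: eqP. Qed.

Lemma fupdC t i j x y : i != j -> fupd (fupd t i x) j y = fupd (fupd t j y) i x.
Proof.
move=> ij; apply/ffunP => k; rewrite !ffunE.
by case: (eqVneq k j) => [->|//]; rewrite eq_sym (negbTE ij).
Qed.

Lemma fupd_invariant (Q : {ffun I -> T} -> Prop) t t' :
  (forall s i x, Q s -> Q (fupd s i x)) -> Q t -> Q t'.
Proof.
move=> Qfupd Qt.
suff /(_ (enum I)) : forall s : seq I, Q [ffun j => if j \in s then t' j else t j].
  by congr Q; apply/ffunP => j; rewrite ffunE mem_enum.
elim=> [|i s IH]; first by congr Q: Qt; apply/ffunP => j; rewrite ffunE.
congr Q: (Qfupd _ i (t' i) IH); apply/ffunP => j; rewrite !ffunE inE.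
by case: (eqVneq j i) => [->|].
Qed.
End FunUpdate.
Arguments fupd_invariant {I T} Q {t t'}.

Definition edge_step (T : eqType) (u v x y : T) : Prop := x = y \/ (x = u /\ y = v).

Lemma edge_step_trans (T : eqType) (u v x y z : T) :
  edge_step u v x y -> edge_step u v y z -> edge_step u v x z.
Proof. by move=> [->|[-> ->]] [<-|[-> ->]]; rewrite /edge_step; tauto. Qed.

Lemma edge_step_eq (T : eqType) (u v x y : T) : edge_step u v x y -> x != u -> x = y.
Proof. by move=> [//|[->]]; rewrite eqxx. Qed.

Section Graph.
Variables (A : finType) (E : rel A).
Hypothesis E_sym : symmetric E.
Hypothesis E_irr : irreflexive E.
Hypothesis E_connected : forall x y, connect E x y.
Hypothesis E_two_nbrs : forall x, exists y z, [/\ E x y, E x z & y != z].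

Lemma E_neq x y : E x y -> x != y.
Proof. by apply: contraTneq => ->; rewrite E_irr. Qed.

Definition edge_local (h : A -> A) := forall u v, E u v -> edge_step u v (h u) (h v).

Lemma edge_local_walk h s p : edge_local h -> path E s p ->
  h (last s p) != h s -> h s \in belast s p /\ h (h s) = h s.
Proof.
move=> h_loc; elim: p s => [|x p IH] s /=; first by rewrite eqxx.
move=> /andP [E_sx E_p] h_last; case: (h_loc _ _ E_sx) => [h_sx | [h_s _]].
  by rewrite h_sx in h_last *; have [+ ->] := IH _ E_p h_last; rewrite inE => ->; rewrite orbT.
by rewrite h_s inE eqxx.
Qed.

Lemma edge_local_diag_const (phi : A -> A -> A) c :
  (forall y, edge_local (phi^~ y)) -> (forall x, edge_local (phi x)) ->
  (forall x, phi x x = c) -> forall x y, phi x y = c.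
Proof.
move=> loc1 loc2 diag x y; apply/eqP/negPn/negP => phi_xy.
have /connectP [p E_p y_last] := E_connected x y.
have [_ fix_v] : phi x y \in belast x p /\ phi (phi x y) y = phi x y.
  by apply: (edge_local_walk (loc1 y) E_p); rewrite /= -y_last diag eq_sym.
have /connectP [q E_q v_last] := E_connected y (phi x y).
case: (shortenP E_q) v_last => q' E_q' uniq_q' _ v_last.
have := edge_local_walk (loc2 (phi x y)) E_q'.
rewrite fix_v -v_last diag eq_sym => /(_ phi_xy) [v_q' _].
by move: uniq_q'; rewrite lastI rcons_uniq -v_last v_q'.
Qed.

Definition E_minus u : rel A := [rel x y | [&& E x y, x != u & y != u]].

Definition cluster u v := [set w | connect (E_minus u) v w].

Section TwoVoters.
Variable phi : A -> A -> A.
Hypothesis phi_id : forall x, phi x x = x.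
Hypothesis phi_local1 : forall y, edge_local (phi^~ y).
Hypothesis phi_local2 : forall x, edge_local (phi x).

Lemma phi_on_edge a b : E a b -> phi a b = a \/ phi a b = b.
Proof. by move=> E_ab; case: (phi_local1 b E_ab) => /= [->|[-> _]]; rewrite ?phi_id; tauto. Qed.

Definition beats u w := (phi w u == u) && (phi u w == u).

Lemma beats_adj u v w : beats u v -> v != u -> E v w -> beats u w.
Proof.
move=> /andP [/eqP vu /eqP uv] v_u E_vw; have u_v : u != v by rewrite eq_sym.
apply/andP; split; apply/eqP.
  by have := edge_step_eq (phi_local1 u E_vw); rewrite /= vu => /(_ u_v) <-.
by have := edge_step_eq (phi_local2 u E_vw); rewrite /= uv => /(_ u_v) <-.
Qed.

Lemma beats_descent a b : E a b -> beats a b ->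
  exists2 c, E b c & beats b c /\ cluster b c \proper cluster a b.
Proof.
move=> E_ab B_ab; have E_ba : E b a by rewrite E_sym.
have b_a : b != a := E_neq E_ba.
have [c E_bc c_a] : exists2 c, E b c & c != a.
  have [y [z [E_by E_bz y_z]]] := E_two_nbrs b.
  by case: (eqVneq y a) => [y_a|]; [exists z; rewrite // -y_a eq_sym | exists y].
have /andP [/eqP ca /eqP ac] := beats_adj B_ab b_a E_bc.
have stay (h : A -> A) : edge_local h -> h b = b \/ h b = c -> h a = a -> h b = b.
  move=> h_loc [//|hb] ha; case: (eqVneq c b) => [cb|c_b]; first by rewrite hb cb.
  by have := edge_step_eq (h_loc _ _ E_ba); rewrite hb ha => /(_ c_b) /eqP; rewrite (negbTE c_a).
have B_bc : beats b c.
  have E_cb : E c b by rewrite E_sym.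
  apply/andP; split; apply/eqP; last exact: stay (phi_local1 c) (phi_on_edge E_bc) ac.
  by apply: stay (phi_local2 c) _ ca; case: (phi_on_edge E_cb) => ->; [right | left].
have beats_b_neq_a z : beats b z -> z != a.
  move: B_ab => /andP [_ /eqP ab]; apply: contraTneq => ->.
  by rewrite /beats ab (negbTE (E_neq E_ab)).
have in_cluster w : w \in cluster b c ->
    [/\ beats b w, w != b & connect (E_minus a) b w].
  rewrite inE => c_w.
  apply: (connect_propagate (fun w => [/\ beats b w, w != b & connect (E_minus a) b w])
    _ c_w) => [x y /and3P [E_xy x_b y_b] [B_bx _ ab_x]|].
    split=> //; first exact: beats_adj B_bx x_b E_xy.
    apply: connect_trans ab_x (connect1 _).
    by rewrite /E_minus /= E_xy !beats_b_neq_a //; apply: beats_adj B_bx x_b E_xy.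
  split=> //; first by rewrite eq_sym E_neq.
  by apply: connect1; rewrite /E_minus /= E_bc b_a c_a.
exists c => //; split=> //; apply/properP; split.
  by apply/subsetP => w /in_cluster [_ _]; rewrite inE.
exists b; first by rewrite inE connect0.
by apply/negP => /in_cluster [_ /eqP].
Qed.

Lemma not_beats a b : E a b -> ~~ beats a b.
Proof.
move=> E_ab; apply/negP => B_ab; have [m] := ubnP #|cluster a b|.
elim: m a b E_ab B_ab => // m IH a b E_ab B_ab lt_m.
have [c E_bc [B_bc lt_bc]] := beats_descent E_ab B_ab.
exact: IH E_bc B_bc (leq_trans (proper_card lt_bc) _).
Qed.

Lemma wins_flip a b : E a b -> phi a b = a -> phi b a = b.
Proof.
move=> E_ab ab; have E_ba : E b a by rewrite E_sym.
case: (phi_on_edge E_ba) => // ba.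
by have := not_beats E_ab; rewrite /beats ab ba eqxx.
Qed.

Lemma wins_next a b c : E a b -> E b c -> a != c -> phi a b = a -> phi b c = b.
Proof.
move=> E_ab E_bc a_c ab; case: (phi_on_edge E_bc) => // bc.
have E_ba : E b a by rewrite E_sym.
have c_b : c != b by rewrite eq_sym E_neq.
have ac : c = phi a c by have := edge_step_eq (phi_local1 c E_ba); rewrite /= bc => /(_ c_b).
have := edge_step_eq (phi_local2 a E_bc); rewrite /= ab -ac => /(_ (E_neq E_ab)) /eqP.
by rewrite (negbTE a_c).
Qed.

Lemma first_projection a b : E a b -> phi a b = a -> forall x y, phi x y = x.
Proof.
move=> E_ab ab; have E_ba : E b a by rewrite E_sym.
pose wins v := forall w, E v w -> phi v w = v.
have wins_a : wins a.
  move=> z E_az; case: (eqVneq z b) => [->//|z_b].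
  by apply: wins_next E_ba E_az _ (wins_flip E_ab ab); rewrite eq_sym.
have wins_all v : wins v.
  apply: (connect_propagate wins) (E_connected a v) wins_a => x y E_xy wins_x z E_yz.
  case: (eqVneq x z) => [<-|x_z]; first exact: wins_flip E_xy (wins_x _ E_xy).
  exact: wins_next E_xy E_yz x_z (wins_x _ E_xy).
move=> x y; apply: (connect_propagate (fun w => phi x w = x)) (E_connected x y) (phi_id x).
move=> w z E_wz xw.
case: (eqVneq w x) E_wz => [->|w_x E_wz]; first exact: wins_all.
by have := edge_step_eq (phi_local2 x E_wz); rewrite /= xw eq_sym => /(_ w_x) <-.
Qed.

End TwoVoters.

Lemma two_voter_projection (phi : A -> A -> A) : (forall x, phi x x = x) ->
  (forall y, edge_local (phi^~ y)) -> (forall x, edge_local (phi x)) ->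
  (forall x y, phi x y = x) \/ (forall x y, phi x y = y).
Proof.
move=> phi_id loc1 loc2; have [a _|A0] := pickP (@predT A); last by left=> x; have := A0 x.
have [b [_ [E_ab _ _]]] := E_two_nbrs a.
case: (phi_on_edge phi_id loc1 E_ab) => ab; first by left; apply: first_projection ab.
right=> x y; have E_ba : E b a by rewrite E_sym.
exact: (@first_projection (fun x y => phi y x)) E_ba ab y x.
Qed.

Definition coord_local (I : finType) (g : {ffun I -> A} -> A) :=
  forall t i, edge_local (fun x => g (fupd t i x)).

Lemma coord_local_block (I : finType) (g : {ffun I -> A} -> A) (s : seq I)
    (t : {ffun I -> A}) :
  coord_local g -> uniq s -> edge_local (fun x => g [ffun j => if j \in s then x else t j]).
Proof.
move=> g_loc; elim: s t => [|i s IH] t /=.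
  by move=> _ u v _; left; congr g; apply/ffunP => j; rewrite !ffunE.
move=> /andP [i_s s_uniq] u v E_uv.
have block_cons x : [ffun j => if j \in i :: s then x else t j] =
    fupd [ffun j => if j \in s then x else t j] i x.
  by apply/ffunP => j; rewrite !ffunE inE; case: eqP => [->|].
have block_fupd (x y : A) : [ffun j => if j \in s then x else fupd t i y j] =
    fupd [ffun j => if j \in s then x else t j] i y.
  by apply/ffunP => j; rewrite !ffunE; case: eqP => [->|//]; rewrite (negbTE i_s).
rewrite !block_cons; apply: edge_step_trans (g_loc _ i u v E_uv) _.
by rewrite -!block_fupd; apply: IH.
Qed.

Section Merge.
Variables (I : finType) (g : {ffun I -> A} -> A) (i0 j0 : I).
Hypothesis i0_j0 : i0 != j0.
Hypothesis g_const : forall a, g [ffun=> a] = a.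
Hypothesis g_local : coord_local g.
Implicit Types (t : {ffun I -> A}) (x y : A).

Definition pair_sec t x y := g (fupd (fupd t i0 x) j0 y).

Lemma pair_sec_local1 t y : edge_local (pair_sec t ^~ y).
Proof. by move=> u v E_uv; rewrite /pair_sec !(fupdC _ _ _ i0_j0); apply: g_local. Qed.

Lemma pair_sec_local2 t x : edge_local (pair_sec t x).
Proof. by move=> u v E_uv; apply: g_local. Qed.

Lemma pair_sec_self t : pair_sec t (t i0) (t j0) = g t.
Proof. by rewrite /pair_sec !fupd_id. Qed.

Lemma pair_sec_eq t t' : (forall j, j != i0 -> j != j0 -> t j = t' j) ->
  pair_sec t =2 pair_sec t'.
Proof.
move=> tt' x y; congr g; apply/ffunP => j; rewrite !ffunE.
by case: eqP => // /eqP j_j0; case: eqP => // /eqP j_i0; apply: tt'.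
Qed.

Definition first_wins t := forall x y, pair_sec t x y = x.

Section Diagonal.
Hypothesis diag : forall t x, pair_sec t x x = x.

Lemma first_wins_edge t m a b : E a b -> first_wins (fupd t m a) -> first_wins (fupd t m b).
Proof.
move=> E_ab wins_a.
have [m_pair|] := boolP ((m == i0) || (m == j0)).
  move=> x y; rewrite -[RHS](wins_a x y); apply: (pair_sec_eq _ x y) => j j_i0 j_j0.
  have j_m : j != m by case/orP: m_pair => /eqP ->.
  by rewrite !ffunE (negbTE j_m).
rewrite negb_or => /andP [m_i0 m_j0].
have [//|wins2] :=
  two_voter_projection (diag (fupd t m b)) (pair_sec_local1 _) (pair_sec_local2 _).
(* With i0 reporting b and j0 reporting a, moving voter m from a to b would move
   the outcome from b to a, against the direction of the edge. *)
have shift x : g (fupd (fupd (fupd t i0 b) j0 a) m x) = pair_sec (fupd t m x) b a.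
  by rewrite /pair_sec !(fupdC _ _ _ (_ : _ != m)) // eq_sym.
have := g_local (fupd (fupd t i0 b) j0 a) m E_ab; rewrite /= !shift wins_a wins2.
by case=> [|[]] /eqP; rewrite eq_sym (negbTE (E_neq E_ab)).
Qed.

Lemma first_wins_invariant t : first_wins t -> forall t', first_wins t'.
Proof.
move=> wins_t t'; apply: (fupd_invariant first_wins) wins_t => s m c wins_s.
apply: (connect_propagate (fun x => first_wins (fupd s m x))) (E_connected (s m) c) _.
  by move=> x y E_xy; apply: first_wins_edge.
by rewrite fupd_id.
Qed.

Lemma pair_sec_dictator : (forall t, g t = t i0) \/ (forall t, g t = t j0).
Proof.
have [t0 _|no_t] := pickP (@predT {ffun I -> A}); last by left=> t; have := no_t t.
have proj t := two_voter_projection (diag t) (pair_sec_local1 t) (pair_sec_local2 t).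
case: (proj t0) => [wins0|second0]; [left | right] => t; rewrite -pair_sec_self.
  exact: (first_wins_invariant wins0 t).
case: (proj t) => [wins_t|-> //].
have [b [_ [E_ab _ _]]] := E_two_nbrs (t0 i0).
have := first_wins_invariant wins_t t0 (t0 i0) b; rewrite second0 => b_a.
by move: (E_neq E_ab); rewrite b_a eqxx.
Qed.

End Diagonal.

Definition retract (j : I) : {k | k != j0} := insubd (exist (fun k => k != j0) i0 i0_j0) j.

Lemma val_retract j : val (retract j) = if j == j0 then i0 else j.
Proof. by rewrite val_insubd; case: eqP. Qed.

Definition merge (s : {ffun {k | k != j0} -> A}) := g [ffun j => s (retract j)].

Lemma merge_const a : merge [ffun=> a] = a.
Proof. by rewrite /merge -[RHS]g_const; congr g; apply/ffunP => j; rewrite !ffunE. Qed.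

Lemma merge_local : coord_local merge.
Proof.
move=> s k u v E_uv; rewrite /merge.
have block x : [ffun j => fupd s k x (retract j)] =
    [ffun j => if j \in enum [pred j | retract j == k] then x else [ffun j => s (retract j)] j].
  by apply/ffunP => j; rewrite !ffunE mem_enum inE.
by rewrite /= !block; apply: coord_local_block (enum_uniq _) _ _ E_uv.
Qed.

Lemma pair_sec_diag t x : pair_sec t x x = merge [ffun k => fupd t i0 x (val k)].
Proof.
rewrite /pair_sec /merge; congr g; apply/ffunP => j.
by rewrite !ffunE val_retract; case: eqP => _ //; rewrite eqxx.
Qed.

Lemma card_merge : #|{: {k | k != j0}}| = #|I|.-1.
Proof. by rewrite card_sig cardC1. Qed.

End Merge.

Lemma coord_local_dictator (I : finType) (g : {ffun I -> A} -> A) :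
  0 < #|I| -> (forall a, g [ffun=> a] = a) -> coord_local g -> exists i, forall t, g t = t i.
Proof.
have [m] := ubnP #|I|; elim: m I g => // m IH I g; rewrite ltnS => I_le I_gt0 g_const g_local.
have [I_gt1|I_le1] := ltnP 1 #|I|; last first.
  have I1 : #|I| = 1 by apply/eqP; rewrite eqn_leq I_le1 I_gt0.
  have [i I_i] := fintype1 I1; exists i => t.
  by rewrite -[t in LHS](_ : [ffun=> t i] = t) ?g_const //; apply/ffunP => j; rewrite ffunE (I_i j).
have /card_gt1P [i0 [j0 [_ _ i0_j0]]] := I_gt1.
have [||||k dict_k] := IH _ (merge g i0_j0); rewrite ?card_merge.
- by move: I_gt1 I_le; case: #|I|.
- by move: I_gt1; case: #|I|.
- exact: merge_const.
- exact: merge_local.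
have diag t x : pair_sec g i0 j0 t x x = fupd t i0 x (val k).
  by rewrite (pair_sec_diag _ i0_j0) dict_k ffunE.
have [k_i0|k_i0] := eqVneq (val k) i0.
  have diag_id t x : pair_sec g i0 j0 t x x = x by rewrite diag k_i0 ffunE eqxx.
  by case: (pair_sec_dictator i0_j0 g_local diag_id) => dict; [exists i0 | exists j0].
exists (val k) => t; rewrite -(pair_sec_self g i0 j0).
apply: (@edge_local_diag_const (pair_sec g i0 j0 t)) => [y|x|x].
- exact: pair_sec_local1.
- exact: pair_sec_local2.
- by rewrite diag ffunE (negbTE k_i0).
Qed.

End Graph.

Lemma index_tnth (T : eqType) n (s : n.-tuple T) (j : 'I_n) : uniq s -> index (tnth s j) s = j.
Proof. by move=> s_uniq; rewrite (tnth_nth (tnth s j)) index_uniq // size_tuple. Qed.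

Definition swap_rank (k i : nat) := if i == k then k.+1 else if i == k.+1 then k else i.

Lemma val_tperm_succ n (k k' j : 'I_n) :
  val k' = (val k).+1 -> val (tperm k k' j) = swap_rank k j.
Proof.
rewrite /swap_rank => k'k; case: tpermP => [->|->|/eqP j_k /eqP j_k']; rewrite ?eqxx //.
  by rewrite k'k eqxx; case: eqP => //; lia.
by rewrite -!val_eqE /= k'k in j_k j_k' *; rewrite (negbTE j_k) (negbTE j_k').
Qed.

Lemma swap_rank_monotone k i j :
  i <= j -> swap_rank k j <= swap_rank k i -> i = j \/ (i = k /\ j = k.+1).
Proof.
by rewrite /swap_rank; case: (j =P k); case: (j =P k.+1); case: (i =P k); case: (i =P k.+1); lia.
Qed.

Section Preferences.
Variable A : finType.
Implicit Types (p q : pref A) (D : {set pref A}).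

Lemma mem_linorder p x : uniq p -> x \in p.
Proof.
move=> p_uniq; have size_enum : size (enum A) <= size p by rewrite -cardT size_tuple.
by have [_ ->] := uniq_min_size p_uniq (fun y _ => mem_enum predT y) size_enum; rewrite mem_enum.
Qed.

Lemma top_index p x : x \in p -> (top p == Some x) = (index x p == 0).
Proof.
case: p => [[|y s] ?]; rewrite /top //= => _.
case: (y =P x) => [->|/eqP y_x]; first by rewrite !eqxx.
by apply: negbTE; apply: contra y_x => /eqP [->].
Qed.

Lemma adjacent_sym p q : adjacent p q -> adjacent q p.
Proof.
move=> /existsP [k /existsP [k' /andP [k'k /forallP qp]]].
apply/existsP; exists k; apply/existsP; exists k'; rewrite k'k /=.
by apply/forallP => j; move/eqP: (qp (tperm k k' j)); rewrite tpermK => ->.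
Qed.

Lemma adjacent_index p q : uniq p -> uniq q -> adjacent p q ->
  exists k, forall z, z \in p -> index z q = swap_rank k (index z p).
Proof.
move=> p_uniq q_uniq /existsP [k /existsP [k' /andP [/eqP k'k /forallP qp]]].
exists k => z z_p; have z_lt : index z p < #|A| by move: z_p; rewrite -index_mem size_tuple.
set j := Ordinal z_lt; have -> : z = tnth p j by rewrite (tnth_nth z) nth_index.
have q_j : tnth q (tperm k k' j) = tnth p j by have /eqP := qp (tperm k k' j); rewrite tpermK.
by rewrite index_tnth // -q_j index_tnth // (val_tperm_succ _ k'k).
Qed.

Lemma adjacent_prefers_step p q a b x y : uniq p -> uniq q -> adjacent p q ->
  top p = Some a -> top q = Some b -> a != b ->
  ~~ prefers p y x -> ~~ prefers q x y -> edge_step a b x y.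
Proof.
move=> p_uniq q_uniq pq pa qb a_b; rewrite /prefers -!leqNgt => px_py qy_qx.
have [k index_q] := adjacent_index p_uniq q_uniq pq.
have mem z : z \in p := mem_linorder z p_uniq.
have mem_q z : z \in q := mem_linorder z q_uniq.
rewrite !index_q // in qy_qx.
have [xy|[xk yk]] := swap_rank_monotone px_py qy_qx; first by left; apply: index_inj xy.
have k0 : k = 0.
  have a0 : index a p = 0 by apply/eqP; rewrite -top_index // pa.
  case: (posnP k) => // k_gt0; case/eqP: a_b.
  suff : top q == Some a by rewrite qb => /eqP [].
  by rewrite top_index // index_q // a0; case: (k) k_gt0.
right; split; apply/esym/eqP.
  by rewrite -(inj_eq Some_inj) -pa top_index // xk k0.
by rewrite -(inj_eq Some_inj) -qb top_index // index_q // yk k0.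
Qed.

Definition top_graph D : rel A := fun a b => (a != b) &&
  [exists p in D, exists q in D, [&& adjacent p q, top p == Some a & top q == Some b]].

Lemma top_graph_sym D : symmetric (top_graph D).
Proof.
suff sym_imp a b : top_graph D a b -> top_graph D b a.
  by move=> a b; apply/idP/idP; apply: sym_imp.
case/andP=> a_b /exists_inP [p p_D /exists_inP [q q_D /and3P [pq pa qb]]].
rewrite /top_graph eq_sym a_b; apply/exists_inP; exists q => //; apply/exists_inP; exists p => //.
by rewrite adjacent_sym ?pa ?qb.
Qed.

Lemma top_graph_irr D : irreflexive (top_graph D).
Proof. by move=> a; rewrite /top_graph eqxx. Qed.

Section Best.
Hypothesis A_gt0 : 0 < #|A|.

Definition best p := tnth p (Ordinal A_gt0).

Lemma top_best p : top p = Some (best p).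
Proof.
case: p => [[|y s] size_s]; last by rewrite /best (tnth_nth y).
by exfalso; have := A_gt0; rewrite -(eqP size_s).
Qed.

Lemma top_graph_adjacent D p q : p \in D -> q \in D -> adjacent p q ->
  best p != best q -> top_graph D (best p) (best q).
Proof.
move=> p_D q_D pq p_q; rewrite /top_graph p_q; apply/exists_inP; exists p => //.
by apply/exists_inP; exists q; rewrite // pq !top_best !eqxx.
Qed.

Lemma connect_top_graph D p s : path (@adjacent A) p s -> all (fun x => x \in D) (p :: s) ->
  connect (top_graph D) (best p) (best (last p s)).
Proof.
elim: s p => [|r s IH] p /=; first by rewrite connect0.
move=> /andP [pr r_s] /and3P [p_D r_D s_D].
apply: connect_trans (IH r r_s _); last by rewrite /= r_D.
have [->|p_r] := eqVneq (best p) (best r); first exact: connect0.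
exact/connect1/top_graph_adjacent.
Qed.

Lemma top_graph_connected D : minimally_rich D -> connected_dom D ->
  forall a b, connect (top_graph D) a b.
Proof.
move=> D_rich D_conn a b.
have [p p_D pa] := D_rich a; have [q q_D qb] := D_rich b.
have [s [_ s_D ps s_q]] := D_conn p q p_D q_D.
by move: pa qb; rewrite -s_q !top_best => -[<-] [<-]; apply: connect_top_graph.
Qed.

Lemma top_connected_path D p s : path (@adjacent A) p s -> all (fun x => x \in D) (p :: s) ->
  all (fun x => top x == top p) (p :: s) -> top_connected D p (last p s).
Proof.
move=> ps s_D s_top; case: (shortenP ps) => s' ps' s'_uniq s'_s.
have sub_all P : all P (p :: s) -> all P (p :: s').
  by case/andP=> /= -> /allP P_s; apply/allP => r /s'_s /P_s.
by exists s'; split; [split | ]; rewrite ?sub_all.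
Qed.

Lemma neighbour_top_graph D p q : p \in D -> neighbour D (in_TCC D p) q ->
  top_graph D (best p) (best q).
Proof.
move=> p_D [q_D q_TCC [r r_TCC rq]].
have [s [ps s_D s_top s_r]] : exists s, [/\ path (@adjacent A) p s,
    all (fun x => x \in D) (p :: s), all (fun x => top x == top p) (p :: s) & last p s = r].
  by case: r_TCC => [->|[s [[_ ? ? ?] ?]]]; [exists [::]; rewrite /= p_D eqxx | exists s].
rewrite -{}s_r in rq.
have last_D : last p s \in D by apply: (allP s_D); rewrite mem_last.
have last_top : top (last p s) = top p by apply/eqP/(allP s_top); rewrite mem_last.
have p_q : best p != best q.
  apply/eqP => pq_best; apply: q_TCC; right.
  rewrite -(last_rcons p s q); apply: top_connected_path.
  - by rewrite rcons_path ps.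
  - by rewrite -rcons_cons all_rcons q_D.
  - by rewrite -rcons_cons all_rcons s_top !top_best pq_best eqxx.
apply/andP; split => //; apply/exists_inP; exists (last p s) => //.
by apply/exists_inP; exists q; rewrite // rq last_top !top_best !eqxx.
Qed.

Lemma top_graph_two_nbrs D : minimally_rich D -> connected_two_neighbours D ->
  forall a, exists b c, [/\ top_graph D a b, top_graph D a c & b != c].
Proof.
move=> D_rich [_ D_nbrs] a; have [p p_D pa] := D_rich a.
have [q [q' [nq nq' qq']]] := D_nbrs p p_D.
move: pa; rewrite top_best => -[<-]; exists (best q), (best q').
split; try exact: neighbour_top_graph.
by apply/eqP => best_qq; apply: qq'; rewrite !top_best best_qq.
Qed.

End Best.
End Preferences.

Section TopsOnlyScf.
Variables (A : finType) (n : nat) (D : {set pref A}) (f : scf A n).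
Hypothesis D_lin : forall p, p \in D -> is_linorder p.
Hypothesis D_rich : minimally_rich D.
Hypothesis f_unan : unanimous D f.
Hypothesis f_lsp : locally_sp D f.
Hypothesis f_tops : tops_only D f.

Lemma rich_pick a : exists p, (p \in D) && (top p == Some a).
Proof. by have [p p_D pa] := D_rich a; exists p; rewrite p_D pa eqxx. Qed.

Definition pref_of a := xchoose (rich_pick a).

Lemma pref_of_in a : pref_of a \in D.
Proof. by have /andP [] := xchooseP (rich_pick a). Qed.

Lemma top_pref_of a : top (pref_of a) = Some a.
Proof. by have /andP [_ /eqP] := xchooseP (rich_pick a). Qed.

Definition lift_tops (t : {ffun 'I_n -> A}) : profile A n := [ffun i => pref_of (t i)].

Lemma lift_tops_in t : in_dom D (lift_tops t).
Proof. by move=> i; rewrite ffunE pref_of_in. Qed.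

Lemma upd_in (P : profile A n) i p : in_dom D P -> p \in D -> in_dom D (upd P i p).
Proof. by move=> P_D p_D j; rewrite ffunE; case: eqP. Qed.

Lemma upd_at (P : profile A n) i p : upd P i p i = p.
Proof. by rewrite ffunE eqxx. Qed.

Lemma upd_upd (P : profile A n) i p p' : upd (upd P i p) i p' = upd P i p'.
Proof. exact: fupd_fupd. Qed.

Lemma lift_tops_const a : f (lift_tops [ffun=> a]) = a.
Proof. by apply: f_unan (lift_tops_in _) _ => i; rewrite !ffunE top_pref_of. Qed.

Lemma lift_tops_best (A_gt0 : 0 < #|A|) P : in_dom D P ->
  f P = f (lift_tops [ffun i => best A_gt0 (P i)]).
Proof.
by move=> P_D; apply: f_tops P_D (lift_tops_in _) _ => i; rewrite !ffunE top_pref_of top_best.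
Qed.

Lemma lift_tops_local : coord_local (top_graph D) (fun t => f (lift_tops t)).
Proof.
move=> t i u v /andP [u_v /exists_inP [p p_D /exists_inP [q q_D /and3P [pq /eqP pu /eqP qv]]]].
set P := lift_tops t.
have lift_upd x r : r \in D -> top r = Some x -> f (lift_tops (fupd t i x)) = f (upd P i r).
  move=> r_D rx; apply: f_tops (lift_tops_in _) (upd_in i (lift_tops_in t) r_D) _ => j.
  by rewrite /lift_tops /upd !ffunE; case: eqP; rewrite top_pref_of.
have no_gain r r' : r \in D -> r' \in D -> adjacent r r' ->
    ~~ prefers r (f (upd P i r')) (f (upd P i r)).
  move=> r_D r'_D rr'.
  have := @f_lsp (upd P i r) i r' (upd_in i (lift_tops_in t) r_D) r'_D.
  by rewrite upd_at upd_upd; apply.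
rewrite /= (lift_upd u p) // (lift_upd v q) //.
have := adjacent_prefers_step (D_lin p_D) (D_lin q_D) pq pu qv u_v (no_gain _ _ p_D q_D pq).
by apply; apply: no_gain (adjacent_sym pq).
Qed.
End TopsOnlyScf.

Theorem theorem2 (A : finType) (n : nat) (D : {set pref A}) :
  3 <= #|A| -> 2 <= n ->
  (forall p, p \in D -> is_linorder p) ->
  minimally_rich D -> L_tops_only n D ->
  connected_two_neighbours D ->
  forall f : scf A n, unanimous D f -> locally_sp D f -> dictatorship D f.
Proof.
move=> A_ge3 n_ge2 D_lin D_rich D_Ltops D_two f f_unan f_lsp.
have A_gt0 : 0 < #|A| by apply: leq_trans A_ge3.
have f_tops := D_Ltops f f_unan f_lsp.
have [|||i dict_i] := @coord_local_dictator _ _ (top_graph_sym D) (top_graph_irr D)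
  (top_graph_connected A_gt0 D_rich D_two.1) (top_graph_two_nbrs A_gt0 D_rich D_two)
  _ (fun t => f (lift_tops D_rich t)).
- by rewrite card_ord; apply: leq_trans n_ge2.
- exact: lift_tops_const.
- exact: lift_tops_local.
by exists i => P P_D; rewrite (lift_tops_best D_rich f_tops A_gt0 P_D) dict_i ffunE top_best.
Qed.
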